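(* Consider an instance of the Steiner Team Orienteering Problem and the linear program $\mathcal{L}_2$ as described in the context. Let $(\bar{x},\bar{y},\bar{f},\bar{\varphi})$ be a feasible solution of $\mathcal{L}_2$ and let $\tau=\sum_{i\in P}p_i\bar{y}_i$. Let $C\subseteq P$ be a cover for the knapsack inequality $\sum_{i\in P}p_iy_i\le\lfloor\tau\rfloor$, i.e. $\sum_{i\in C}p_i>\lfloor\tau\rfloor$, such that $\bar{y}_i>0$ for all $i\in C$. Then there exists $i\in C$ with $0<\bar{y}_i<1$.
   Context: An instance of the Steiner Team Orienteering Problem (STOP) consists of: a digraph $G=(N,A)$; an origin $s\in N$ and a destination $t\in N$ with $s\neq t$; disjoint sets $S,P\subseteq N\setminus\{s,t\}$ (mandatory and profitable vertices) with $N=S\cup P\cup\{s,t\}$; rewards $p_i\in\mathbb{Z}^+$ for $i\in P$; traverse times $d_{ij}\in\mathbb{R}^+$ for $(i,j)\in A$; a number $m$ of vehicles and a time limit $T$. For $i\in N$ let $\delta^+(i)=\{j\in N:(i,j)\in A\}$ and $\delta^-(i)=\{j\in N:(j,i)\in A\}$. For $i,j\in N$, $R_{ij}$ denotes the minimum of $\sum_{a\in A_p}d_a$ over all paths $p$ from $i$ to $j$ in $G$ (with arc set $A_p$), and $R_{ii}=0$. $\mathcal{L}_2$ is the linear program: maximize $\sum_{i\in P}p_iy_i$ over $x\in\mathbb{R}^A$, $y\in\mathbb{R}^N$, $f\in\mathbb{R}^A$, $\varphi\in\mathbb{R}$ subject to: $y_i=1$ for all $i\in S\cup\{s,t\}$;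 $\sum_{j\in\delta^+(i)}x_{ij}=y_i$ for all $i\in S\cup P$; $\sum_{j\in\delta^+(s)}x_{sj}=\sum_{i\in\delta^-(t)}x_{it}=m-\varphi$; $\sum_{i\in\delta^-(s)}x_{is}=\sum_{j\in\delta^+(t)}x_{tj}=0$; $\sum_{j\in\delta^+(i)}x_{ij}-\sum_{j\in\delta^-(i)}x_{ji}=0$ for all $i\in S\cup P$; $f_{sj}=(T-d_{sj})x_{sj}$ for all $j\in\delta^+(s)$; $\sum_{j\in\delta^-(i)}f_{ji}-\sum_{j\in\delta^+(i)}f_{ij}=\sum_{j\in\delta^+(i)}d_{ij}x_{ij}$ for all $i\in S\cup P$; $f_{ij}\le(T-R_{si}-d_{ij})x_{ij}$ for all $(i,j)\in A$ with $i\neq s$; $f_{ij}\ge R_{jt}x_{ij}$ for all $(i,j)\in A$; $0\le x\le1$, $0\le y\le 1$, $f\ge0$, $0\le\varphi\le m$. *)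

From HB Require Import structures.
From mathcomp Require Import all_boot all_order all_algebra.
From mathcomp Require Import reals.
Set Implicit Arguments. Unset Strict Implicit. Unset Printing Implicit Defensive.
Import Order.TTheory GRing.Theory Num.Theory.
Local Open Scope ring_scope.

Section STOP.
Variables (R : realType) (N : finType).

Definition walk (A : rel N) (i j : N) (p : seq N) : bool :=
  path A i p && (last i p == j).

Definition walk_cost (d : N -> N -> R) (i : N) (p : seq N) : R :=
  \sum_(e <- zip (i :: p) p) d e.1 e.2.

Definition is_min_dist (A : rel N) (d : N -> N -> R) (i j : N) (r : R) : Prop :=
  (exists2 p, walk A i j p & walk_cost d i p = r) /\
  (forall p, walk A i j p -> r <= walk_cost d i p).

Definition shortest_dists (A : rel N) (d : N -> N -> R) (Rd : N -> N -> R) : Prop :=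
  forall i j, (exists p, walk A i j p) -> is_min_dist A d i j (Rd i j).

Definition STOP_instance (A : rel N) (s t : N) (S P : {set N})
    (p : N -> nat) (d : N -> N -> R) (m : nat) (T : R) : Prop :=
  (s != t) /\ [disjoint S & P] /\ (s \notin S :|: P) /\ (t \notin S :|: P) /\
  (forall i : N, [|| i \in S, i \in P, i == s | i == t]) /\
  (forall i, i \in P -> (0 < p i)%N) /\
  (forall i j, A i j -> 0 < d i j).

(* Feasibility for the linear program L_2. Variables x, f are indexed by
   arcs (only their values on arcs of A matter), y by vertices. *)
Definition L2_feasible (A : rel N) (s t : N) (S P : {set N})
    (d : N -> N -> R) (Rd : N -> N -> R) (m : nat) (T : R)
    (x : N -> N -> R) (y : N -> R) (f : N -> N -> R) (phi : R) : Prop :=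
  (forall i, (i \in S) || (i == s) || (i == t) -> y i = 1) /\
  (forall i, i \in S :|: P -> \sum_(j | A i j) x i j = y i) /\
  (\sum_(j | A s j) x s j = m%:R - phi) /\
  (\sum_(i | A i t) x i t = m%:R - phi) /\
  (\sum_(i | A i s) x i s = 0) /\
  (\sum_(j | A t j) x t j = 0) /\
  (forall i, i \in S :|: P ->
     \sum_(j | A i j) x i j - \sum_(j | A j i) x j i = 0) /\
  (forall j, A s j -> f s j = (T - d s j) * x s j) /\
  (forall i, i \in S :|: P ->
     \sum_(j | A j i) f j i - \sum_(j | A i j) f i j
       = \sum_(j | A i j) d i j * x i j) /\
  (forall i j, A i j -> i != s -> f i j <= (T - Rd s i - d i j) * x i j) /\
  (forall i j, A i j -> Rd j t * x i j <= f i j) /\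
  (forall i j, A i j -> 0 <= x i j <= 1) /\
  (forall i, 0 <= y i <= 1) /\
  (forall i j, A i j -> 0 <= f i j) /\
  (0 <= phi <= m%:R).

End STOP.

From HB Require Import structures.
From mathcomp Require Import all_boot all_order all_algebra.
From mathcomp Require Import reals.
Set Implicit Arguments. Unset Strict Implicit. Unset Printing Implicit Defensive.
Import Order.TTheory GRing.Theory Num.Theory.
Local Open Scope ring_scope.

(* If every y_i with i in C were 1, then, y being nonnegative, tau would be at
   least p(C), an integer, so floor tau >= p(C), contradicting that C is a
   cover.  Hence some y_i with i in C is below 1, and it is positive by
   assumption. *)

Section CoverWeights.
Variables (R : realDomainType) (I : finType) (w y : I -> R) (C P : {set I}).
Hypotheses (w_ge0 : forall i, 0 <= w i) (subCP : C \subset P)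
  (y_ge0 : forall i, i \in P -> 0 <= y i).

Lemma sum_le_weighted_sum :
  (forall i, i \in C -> 1 <= y i) -> \sum_(i in C) w i <= \sum_(i in P) w i * y i.
Proof.
move=> y_ge1; rewrite [leRHS](big_setID C) /= (setIidPr subCP) -[leLHS]addr0.
apply: lerD; first by apply: ler_sum => i iC; rewrite ler_peMr ?y_ge1.
by apply: sumr_ge0 => i /setDP[iP _]; rewrite mulr_ge0 ?w_ge0 ?y_ge0.
Qed.

Lemma exists_lt1_of_weighted_sum_lt :
  \sum_(i in P) w i * y i < \sum_(i in C) w i -> exists2 i, i \in C & y i < 1.
Proof.
move=> lt_sum; have [/exists_inP[i iC yi_lt1] | /exists_inPn y_ge1] :=
  boolP [exists i in C, y i < 1]; first by exists i.
suff: \sum_(i in C) w i <= \sum_(i in P) w i * y i by rewrite leNgt lt_sum.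
by apply: sum_le_weighted_sum => i /y_ge1; rewrite -leNgt.
Qed.

End CoverWeights.

Lemma L2_feasible_y_ge0 (R : realType) (N : finType) (A : rel N) (s t : N)
    (S P : {set N}) (d Rd : N -> N -> R) (m : nat) (T : R)
    (x : N -> N -> R) (y : N -> R) (f : N -> N -> R) (phi : R) :
  L2_feasible A s t S P d Rd m T x y f phi -> forall i, 0 <= y i.
Proof.
by case=> _ [_ [_ [_ [_ [_ [_ [_ [_ [_ [_ [_ [y_bnd _]]]]]]]]]]]] i;
  case/andP: (y_bnd i).
Qed.

Theorem proposition3 (R : realType) (N : finType) (A : rel N) (s t : N)
    (S P : {set N}) (p : N -> nat) (d : N -> N -> R) (m : nat) (T : R)
    (Rd : N -> N -> R)
    (x : N -> N -> R) (y : N -> R) (f : N -> N -> R) (phi : R)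
    (C : {set N}) :
  STOP_instance A s t S P p d m T ->
  shortest_dists A d Rd ->
  L2_feasible A s t S P d Rd m T x y f phi ->
  C \subset P ->
  (Num.floor (\sum_(i in P) (p i)%:R * y i) < (\sum_(i in C) p i)%N%:Z)%R ->
  (forall i, i \in C -> 0 < y i) ->
  exists2 i, i \in C & 0 < y i < 1.
Proof.
move=> _ _ feas subCP cover y_gt0.
have tau_lt_pC : \sum_(i in P) (p i)%:R * y i < \sum_(i in C) (p i)%:R :> R.
  by move: cover; rewrite floor_lt_int -pmulrn natr_sum.
have p_ge0 i : 0 <= (p i)%:R :> R by exact: ler0n.
have y_ge0 i : i \in P -> 0 <= y i by move=> _; exact: L2_feasible_y_ge0 feas i.
have [i iC yi_lt1] := exists_lt1_of_weighted_sum_lt p_ge0 subCP y_ge0 tau_lt_pC.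
by exists i; rewrite ?y_gt0 ?yi_lt1.
Qed.
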